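(* Let $b\ge 2$ and $n\ge 0$ be integers. Then $T_b(n)=\langle\{s_0,s_1,\dots,s_{n+1}\}\rangle$, and $\{s_0,s_1,\dots,s_{n+1}\}$ is the minimal system of generators of $T_b(n)$. In particular the embedding dimension is $e(T_b(n))=n+2$.
   Context: For integers $b\ge 2$, $n\ge 0$, $i\ge0$ put $s_i=(b+1)b^{n+i}-1$ and $T_b(n)=\langle\{s_i:i\in\mathbb{N}\}\rangle$, the submonoid of $(\mathbb{N},+)$ generated by the $s_i$. A set $A$ is a system of generators of a numerical semigroup $S$ if $S=\langle A\rangle$; it is minimal if no proper subset of $A$ generates $S$ (every numerical semigroup has a unique minimal system of generators, which is finite). The embedding dimension $e(S)$ is the cardinality of the minimal system of generators. *)

From mathcomp Require Import all_boot.
Set Implicit Arguments. Unset Strict Implicit. Unset Printing Implicit Defensive.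

Definition sgen (b n i : nat) : nat := (b + 1) * b ^ (n + i) - 1.

Inductive monoid_gen (A : nat -> Prop) : nat -> Prop :=
  | mg0 : monoid_gen A 0
  | mgA : forall a x, A a -> monoid_gen A x -> monoid_gen A (a + x).

Definition same_monoid (A B : nat -> Prop) : Prop :=
  forall x, monoid_gen A x <-> monoid_gen B x.

Definition generates (A : nat -> Prop) (S : nat -> Prop) : Prop :=
  forall x, monoid_gen A x <-> S x.

Definition minimal_generating (A : nat -> Prop) (S : nat -> Prop) : Prop :=
  generates A S /\
  forall B : nat -> Prop, (forall x, B x -> A x) -> (exists y, A y /\ ~ B y) ->
    ~ generates B S.

Definition T (b n : nat) : nat -> Prop :=
  monoid_gen (fun x => exists i, x = sgen b n i).

(* Every s_i is congruent to -1 modulo M = (b+1) b^n, since s_i + 1 = M b^i.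
   Hence if s_j were a sum of at least two other generators, the number of
   summands would be congruent to 1 modulo M, hence at least M + 1, forcing
   s_j >= (M + 1) s_0 = M^2 - 1; for j <= n + 1 this fails because b^j < M.
   Conversely every s_m with m >= n + 2 is an explicit nonnegative
   combination of s_0 and s_1. *)

From mathcomp Require Import all_boot zify.
Set Implicit Arguments. Unset Strict Implicit. Unset Printing Implicit Defensive.

Section MonoidGen.

Variable A : nat -> Prop.

Lemma monoid_gen1 a : A a -> monoid_gen A a.
Proof. by move=> Aa; rewrite -[a]addn0; apply: mgA => //; apply: mg0. Qed.

Lemma monoid_genD x y : monoid_gen A x -> monoid_gen A y -> monoid_gen A (x + y).
Proof.
elim=> [//|a x' Aa _ IHx] genAy.
by rewrite -addnA; apply: mgA => //; apply: IHx.
Qed.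

Lemma monoid_genMn x k : monoid_gen A x -> monoid_gen A (k * x).
Proof.
move=> genAx; elim: k => [|k IHk]; first exact: mg0.
by rewrite mulSn; apply: monoid_genD.
Qed.

(* If [x] is a sum of [N] generators then [M] divides [x + N] and [N * m <= x];
   so [M %| x] forces [M %| N], i.e. at least [M] summands. *)
Lemma monoid_gen_dvd_leq M m :
    (forall a, A a -> M %| a.+1 /\ m <= a) ->
  forall x, monoid_gen A x -> M %| x -> 0 < x -> M * m <= x.
Proof.
move=> Agen x genAx.
have [N [dvd_xN Nm_le_x N0_x0]] :
    exists N, [/\ M %| x + N, N * m <= x & N = 0 -> x = 0].
  elim: genAx => [|a x' /Agen [dvd_a m_le_a] _ [N [dvd_xN Nm_le_x N0_x0]]].
    by exists 0.
  exists N.+1; split=> //.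
  - rewrite (_ : a + x' + N.+1 = x' + N + a.+1); last by lia.
    exact: dvdn_add.
  - by rewrite mulSn leq_add.
move=> dvd_x x_gt0.
have N_gt0 : 0 < N by case: N N0_x0 {dvd_xN Nm_le_x} => [/(_ erefl)|]; lia.
have M_le_N : M <= N by rewrite dvdn_leq // -(dvdn_addr N dvd_x).
exact: leq_trans (leq_mul M_le_N (leqnn m)) Nm_le_x.
Qed.

End MonoidGen.

Lemma monoid_gen_sub (A B : nat -> Prop) :
  (forall a, A a -> monoid_gen B a) -> forall x, monoid_gen A x -> monoid_gen B x.
Proof.
move=> AB x; elim=> [|a x' Aa _ IHx]; first exact: mg0.
by apply: monoid_genD => //; apply: AB.
Qed.

Section Thabit.

Variables b n : nat.
Hypothesis b_gt1 : 1 < b.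

Local Notation s := (sgen b n).
Local Notation M := ((b + 1) * b ^ n).

Let b_gt0 : 0 < b := ltnW b_gt1.

Let M_gt0 : 0 < M.
Proof. by rewrite muln_gt0 addn1 expn_gt0 b_gt0. Qed.

Lemma succ_sgen i : (s i).+1 = M * b ^ i.
Proof. by rewrite /sgen expnD mulnA subn1 prednK // muln_gt0 M_gt0 expn_gt0 b_gt0. Qed.

Lemma dvdn_succ_sgen i : M %| (s i).+1.
Proof. by rewrite succ_sgen dvdn_mulr. Qed.

Lemma sgen_inj : injective s.
Proof.
move=> i j /(congr1 succn); rewrite !succ_sgen => /eqP.
by rewrite eqn_pmul2l // => /eqP /(expnI b_gt1).
Qed.

Lemma sgen0_leq i : s 0 <= s i.
Proof. by rewrite -ltnS !succ_sgen expn0 muln1 leq_pmulr // expn_gt0 b_gt0. Qed.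

Lemma sgen_gt0 i : 0 < s i.
Proof.
apply: leq_trans (sgen0_leq i); rewrite -ltnS succ_sgen expn0 muln1.
by rewrite (leq_trans _ (leq_pmulr _ _)) ?expn_gt0 ?b_gt0 //; lia.
Qed.

Lemma sgen_ltn_sq j : j <= n.+1 -> s j < M.+1 * s 0.
Proof.
move=> j_le; have bj_lt : b ^ j < M.
  apply: leq_ltn_trans (_ : b ^ j <= b ^ n.+1) _; first by rewrite leq_exp2l.
  by rewrite expnSr mulnC ltn_pmul2r ?expn_gt0 ?b_gt0 // addn1.
have := succ_sgen j; have := succ_sgen 0; rewrite expn0 muln1; nia.
Qed.

Lemma sgen_indecomposable (B : nat -> Prop) j :
    j <= n.+1 -> (forall a, B a -> exists i, a = s i) -> ~ B (s j) ->
  ~ monoid_gen B (s j).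
Proof.
move=> j_le B_sgen nBj; move Ej : (s j) => y genBy.
case: genBy Ej => [|a x Ba genBx] Ej; first by have := sgen_gt0 j; rewrite Ej.
have [i Ea] := B_sgen a Ba.
have [x0 | x_gt0] := posnP x; first by apply: nBj; rewrite Ej x0 addn0.
have dvd_x : M %| x.
  by rewrite -(dvdn_addr x (dvdn_succ_sgen i)) -Ea addSn -Ej dvdn_succ_sgen.
have Bgen a' : B a' -> M %| a'.+1 /\ s 0 <= a'.
  by move=> /B_sgen [i' ->]; rewrite dvdn_succ_sgen sgen0_leq.
have := monoid_gen_dvd_leq Bgen genBx dvd_x x_gt0.
have := sgen_ltn_sq j_le; have := sgen0_leq i; rewrite -Ea Ej; lia.
Qed.

Lemma sgenE m : s m = s 0 + M * (b ^ m).-1.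
Proof.
apply: succn_inj; rewrite -addSn !succ_sgen expn0 muln1.
by rewrite -mulnS prednK // expn_gt0 b_gt0.
Qed.

Lemma predn_mul_sgen0_ltn : b.-1 * s 0 < b ^ (n + 2).
Proof.
have s0M : s 0 < M by rewrite -ltnS succ_sgen expn0 muln1.
apply: leq_trans (_ : b.-1 * M <= _); first by rewrite ltn_pmul2l // -subn1 subn_gt0.
rewrite mulnA expnD mulnC leq_pmul2l ?expn_gt0 ?b_gt0 //; nia.
Qed.

Lemma expn_leq_predn_mul_sgen1 : b ^ (n + 2) <= b.-1 * s 1.
Proof.
rewrite addn2 expnS; have := succ_sgen 1; rewrite expn1 -mulnA -expnSr.
have : 0 < b ^ n.+1 by rewrite expn_gt0 b_gt0.
move: (b ^ n.+1) (s 1) => P s1 P_gt0.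
by case: b b_gt1 => [|[|c]] // _ s1E; nia.
Qed.

(* [s m = s 0 + R * d] with [d = s 1 - s 0] and [R = 1 + b + ... + b^(m-1)],
   so [s m = x * s 0 + y * s 1] for [y = R - Q * s 0] and [x = 1 + Q * d - y]
   as soon as [Q * s 0 <= R <= Q * s 1]; [Q = b ^ (m - (n + 2))] is such. *)
Lemma sgen_comb_sgen01 m : n + 2 <= m -> exists x y, s m = x * s 0 + y * s 1.
Proof.
move=> /subnKC m_eq; set Q := b ^ (m - (n + 2)); set R := \sum_(i < m) b ^ i.
have Q_gt0 : 0 < Q by rewrite expn_gt0 b_gt0.
have bmE : b ^ m = Q * b ^ (n + 2) by rewrite -{1}m_eq expnD mulnC.
have bR : (b ^ m).-1 = b.-1 * R := predn_exp b m.
have b1_gt0 : 0 < b.-1 by rewrite -subn1 subn_gt0.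
have s1E : s 1 = s 0 + M * b.-1 by rewrite sgenE expn1.
have lo : Q * s 0 <= R.
  rewrite -(leq_pmul2l b1_gt0) mulnCA -bR bmE -ltnS prednK; last first.
    by rewrite muln_gt0 Q_gt0 expn_gt0 b_gt0.
  by rewrite ltn_pmul2l // predn_mul_sgen0_ltn.
have hi : R <= Q * s 1.
  rewrite -(leq_pmul2l b1_gt0) mulnCA -bR (leq_trans (leq_pred _)) // bmE.
  by rewrite leq_pmul2l // expn_leq_predn_mul_sgen1.
set y := R - Q * s 0; set d := M * b.-1.
have xy_eq : (1 + Q * d - y) + y = 1 + Q * d.
  by apply: subnK; move: hi; rewrite s1E mulnDr /y; lia.
exists (1 + Q * d - y), y.
rewrite sgenE bR s1E -/d -(subnKC lo) -/y mulnA -/d.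
by rewrite !mulnDr [RHS]addnA -mulnDl xy_eq mulnDl mul1n; lia.
Qed.

End Thabit.

Theorem mainTheorem4 (b n : nat) (hb : 2 <= b) :
  let G := [seq sgen b n i | i <- iota 0 (n + 2)] in
  generates (fun x => x \in G) (T b n) /\
  minimal_generating (fun x => x \in G) (T b n) /\
  uniq G /\ size G = n + 2.
Proof.
move=> G.
have memG x : reflect (exists2 i, i < n + 2 & x = sgen b n i) (x \in G).
  by apply: (iffP mapP) => -[i i_lt ->]; exists i; rewrite ?mem_iota in i_lt *.
have genG : generates (fun x => x \in G) (T b n).
  move=> x; split; apply: monoid_gen_sub => a.
    by case/memG=> i _ ->; apply: monoid_gen1; exists i.
  case=> i ->; case: (ltnP i (n + 2)) => [i_lt | /(sgen_comb_sgen01 hb) [x0 [y0 ->]]].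
    by apply/monoid_gen1/memG; exists i.
  apply: monoid_genD; apply: monoid_genMn; apply/monoid_gen1/memG.
    by exists 0; rewrite ?addn2.
  by exists 1; rewrite ?addn2.
split=> //; split; first split=> // B BG [_ [/memG [j j_lt ->] nBj]] genB.
  apply: (sgen_indecomposable hb _ _ nBj); first by rewrite -ltnS -addn2.
    by move=> a /BG /memG [i _ ->]; exists i.
  by apply/genB/monoid_gen1; exists j.
by rewrite size_map size_iota map_inj_uniq ?iota_uniq //; apply: sgen_inj.
Qed.
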